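(* Let $(\mathcal G,p)$ be a $1$-closed CPS on the finite set $\Omega$ with $\mathcal G$ closed under unions and nonempty intersections and covering $\Omega$. Then $(\mathcal G,p)$ satisfies certainty reflection if and only if for every state $\omega'$ and every state $\omega$ such that $m(\omega')\subsetneq m(\omega)$, we have $p_{m(\omega)}(m(\omega'))=1$.
   Context: $\Omega$ is a finite set; every subset is an event. A CPS is a pair $(\mathcal G,p)$ where $\mathcal G$ is a family of nonempty subsets of $\Omega$ and $p$ assigns to each $G\in\mathcal G$ a probability measure $p_G$ on $\Omega$ with $p_G(G)=1$ and $p_G(E)=p_G(F)p_F(E)$ whenever $E\subseteq F\subseteq G$, $F,G\in\mathcal G$. Atom: $m(\omega)=\bigcap\{G\in\mathcal G:\omega\in G\}$. $(\mathcal G,p)$ is $1$-closed if every $L\subseteq G$ with $G\in\mathcal G$ and $p_G(L)=1$ belongs to $\mathcal G$. Certainty reflection: for every event $E$, every $q\in[0,1]$ and every $\omega$, $p_{m(\omega)}(E)=q$ implies $p_{m(\omega)}(\{\omega'\in\Omega:p_{m(\omega')}(E)=q\})=1$. *)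

From mathcomp Require Import all_boot all_order all_algebra.
Set Implicit Arguments. Unset Strict Implicit. Unset Printing Implicit Defensive.
Import Order.TTheory GRing.Theory Num.Theory.
Local Open Scope ring_scope.

(* A CPS is a family G of nonempty subsets together with
   a map p assigning to each G in G a measure p G (values of p outside G
   are irrelevant). *)

Section CPS.
Variables (R : realFieldType) (Omega : finType).

Definition prob (mu : {ffun Omega -> R}) (E : {set Omega}) : R :=
  \sum_(x in E) mu x.

Definition is_prob_measure (mu : {ffun Omega -> R}) : Prop :=
  (forall x, 0 <= mu x) /\ \sum_x mu x = 1.

Definition is_CPS (G : {set {set Omega}}) (p : {set Omega} -> {ffun Omega -> R}) : Prop :=
  [/\ forall A, A \in G -> A != set0,
      forall A, A \in G -> is_prob_measure (p A),
      forall A, A \in G -> prob (p A) A = 1 &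
      forall (E F A : {set Omega}), F \in G -> A \in G -> E \subset F -> F \subset A ->
        prob (p A) E = prob (p A) F * prob (p F) E ].

Definition atom (G : {set {set Omega}}) (w : Omega) : {set Omega} :=
  \bigcap_(A in G | w \in A) A.

Definition one_closed (G : {set {set Omega}}) (p : {set Omega} -> {ffun Omega -> R}) : Prop :=
  forall A L : {set Omega}, A \in G -> L \subset A -> prob (p A) L = 1 -> L \in G.

Definition union_closed (G : {set {set Omega}}) : Prop :=
  forall A B, A \in G -> B \in G -> A :|: B \in G.

Definition nonempty_inter_closed (G : {set {set Omega}}) : Prop :=
  forall A B, A \in G -> B \in G -> A :&: B != set0 -> A :&: B \in G.

Definition covers (G : {set {set Omega}}) : Prop :=
  forall w : Omega, exists2 A, A \in G & w \in A.

Definition certainty_reflection (G : {set {set Omega}})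
    (p : {set Omega} -> {ffun Omega -> R}) : Prop :=
  forall (E : {set Omega}) (q : R) (w : Omega), 0 <= q <= 1 ->
    prob (p (atom G w)) E = q ->
    prob (p (atom G w)) [set w' | prob (p (atom G w')) E == q] = 1.

End CPS.

From mathcomp Require Import all_boot all_order all_algebra.
Import Order.TTheory GRing.Theory Num.Theory.
Local Open Scope ring_scope.

Set Implicit Arguments.
Unset Strict Implicit.
Unset Printing Implicit Defensive.

(* Write A := m(w) and E := m(w') with E a proper subset of A.
   If certainty is reflected but q := p_A(E) <> 1, then every state of E puts
   conditional probability 1 on E, so E misses the event
   T = {w'' | p_{m(w'')}(E) = q}, which has p_A-probability 1.  Hence p_A(E) = 0,
   and by 1-closedness A \ E is a member of G containing w, contradicting the
   minimality of the atom A.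
   Conversely, if every proper subatom m(x) of A has p_A-probability 1, the chain
   rule gives p_{m(x)}(E) = p_A(E) for every x in the support of p_A, so this
   support lies in T. *)

Section Probability.
Variables (R : realFieldType) (Omega : finType) (mu : {ffun Omega -> R}).
Hypothesis mu_prob : is_prob_measure mu.
Implicit Types (E X : {set Omega}).

Lemma prob_ge0 E : 0 <= prob mu E.
Proof. by apply: sumr_ge0 => x _; case: mu_prob. Qed.

Lemma prob_setC E : prob mu (~: E) = 1 - prob mu E.
Proof.
case: mu_prob => _ <-; rewrite /prob [\sum_x mu x](bigID (mem E)) /=.
by rewrite addrC addrK; apply: eq_bigl => x; rewrite inE.
Qed.

Lemma prob_le1 E : prob mu E <= 1.
Proof. by rewrite -subr_ge0 -prob_setC prob_ge0. Qed.

Lemma prob_eq1P E : prob mu E = 1 <-> (forall x, mu x != 0 -> x \in E).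
Proof.
have mu_ge0 x : 0 <= mu x by case: mu_prob.
have eq1_C0 : prob mu E = 1 <-> prob mu (~: E) = 0.
  rewrite prob_setC; split=> [->|/eqP]; first by rewrite subrr.
  by rewrite subr_eq0 eq_sym => /eqP.
split=> [/eq1_C0 C0 x | suppE]; last first.
  by apply/eq1_C0/big1 => x; rewrite inE => xNE; apply/eqP; apply: contraNT xNE => /suppE.
by apply: contraR => xNE; apply/eqP/(psumr_eq0P _ C0); rewrite ?inE.
Qed.

Lemma prob_setI_eq1 E X : prob mu X = 1 -> prob mu (E :&: X) = prob mu E.
Proof.
move=> /prob_eq1P suppX; rewrite [RHS](big_setID X) /= [X in _ + X]big1 ?addr0 //.
by move=> x; rewrite inE => /andP[xNX _]; apply: contraNeq xNX => /suppX.
Qed.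

End Probability.

Section Atoms.
Variables (Omega : finType) (G : {set {set Omega}}).
Local Notation m := (atom G).

Lemma mem_atom w : w \in m w.
Proof. by apply/bigcapP => A /andP[]. Qed.

Lemma atom_min A w : A \in G -> w \in A -> m w \subset A.
Proof. by move=> AG wA; apply: bigcap_inf; rewrite AG wA. Qed.

Hypotheses (G_inter : nonempty_inter_closed G) (G_cover : covers G).

Lemma atom_in w : m w \in G.
Proof.
have [A0 A0G wA0] := G_cover w.
have -> : m w = A0 :&: m w by apply/esym/setIidPr/atom_min.
(* The empty intersection is [setT], which need not lie in G: meeting with A0
   repairs the base case of the induction. *)
pose P (X : {set Omega}) := (w \in X) && (A0 :&: X \in G).
suff /andP[] : P (m w) by [].
have meet_in X : X \in G -> w \in X -> A0 :&: X \in G.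
  by move=> XG wX; apply: G_inter => //; apply/set0Pn; exists w; rewrite inE wA0.
apply: (big_ind P) => [|X Y /andP[wX XG] /andP[wY YG]|A /andP[AG wA]].
- by rewrite /P in_setT setIT A0G.
- rewrite /P inE wX wY -(setIid A0) setIACA; apply: G_inter => //.
  by apply/set0Pn; exists w; rewrite !inE wA0 wX wY.
- by rewrite /P wA meet_in.
Qed.

Lemma atom_sub w w' : w \in m w' -> m w \subset m w'.
Proof. exact/atom_min/atom_in. Qed.

End Atoms.

Section ConditionalProbability.
Variables (R : realFieldType) (Omega : finType).
Variables (G : {set {set Omega}}) (p : {set Omega} -> {ffun Omega -> R}).
Hypothesis p_cps : is_CPS G p.

Lemma cps_prob_measure A : A \in G -> is_prob_measure (p A).
Proof. by case: p_cps => _ + _ _; apply. Qed.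

Lemma cps_prob_supset (A E : {set Omega}) : A \in G -> A \subset E -> prob (p A) E = 1.
Proof.
move=> AG sAE; have [_ _ pAA _] := p_cps.
apply/(prob_eq1P (cps_prob_measure AG)) => x px; apply: (subsetP sAE).
by move: x px; apply/(prob_eq1P (cps_prob_measure AG))/pAA.
Qed.

Lemma cps_cond_eq (A B E : {set Omega}) : A \in G -> B \in G -> B \subset A ->
  prob (p A) B = 1 -> prob (p B) E = prob (p A) E.
Proof.
move=> AG BG sBA pAB; have [_ _ pBB chain] := p_cps.
have := chain (E :&: B) B A BG AG (subsetIr _ _) sBA.
rewrite pAB mul1r (prob_setI_eq1 (cps_prob_measure AG)) //.
by rewrite (prob_setI_eq1 (cps_prob_measure BG)) ?pBB.
Qed.

End ConditionalProbability.

Section CertaintyReflection.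
Variables (R : realFieldType) (Omega : finType).
Variables (G : {set {set Omega}}) (p : {set Omega} -> {ffun Omega -> R}).
Hypotheses (p_cps : is_CPS G p) (G_inter : nonempty_inter_closed G) (G_cover : covers G).
Local Notation m := (atom G).

Let atomG w : m w \in G := atom_in G_inter G_cover w.
Let pm w : is_prob_measure (p (m w)) := cps_prob_measure p_cps (atomG w).

Definition nested_atoms_certain : Prop :=
  forall w' w, m w' \proper m w -> prob (p (m w)) (m w') = 1.

Lemma certainty_reflection_nested_atoms :
  one_closed G p -> certainty_reflection G p -> nested_atoms_certain.
Proof.
move=> one_cl CR w' w /properP[sEA [x xA xNE]].
set A := m w; set E := m w'; set q := prob (p A) E.
apply/eqP; apply: contraT => qN1.
have q01 : 0 <= q <= 1 by rewrite (prob_ge0 (pm w)) (prob_le1 (pm w)).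
have T1 := CR E q w q01 erefl.
set T := [set _ | _] in T1.
have ET0 : E :&: T = set0.
  apply/setP => y; rewrite !inE; apply/negbTE/nandP.
  have [yE|] := boolP (y \in E); [right | by left].
  by rewrite (cps_prob_supset p_cps (atomG y) (atom_sub G_inter G_cover yE)) eq_sym.
have E0 : q = 0 by rewrite /q -(prob_setI_eq1 (pm w) E T1) ET0 /prob big_set0.
have AE_G : A :\: E \in G.
  have pAA : prob (p A) A = 1 := cps_prob_supset p_cps (atomG w) (subxx A).
  apply: (one_cl A) (atomG w) (subsetDl _ _) _.
  by rewrite setDE setIC (prob_setI_eq1 (pm w) _ pAA) (prob_setC (pm w)) -/q E0 subr0.
have wAE : w \in A :\: E.
  rewrite inE mem_atom andbT; apply: contra xNE => wE.
  exact: subsetP (atom_sub G_inter G_cover wE) x xA.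
have := subsetP (atom_min AE_G wAE) w' (subsetP sEA w' (mem_atom G w')).
by rewrite inE mem_atom.
Qed.

Lemma nested_atoms_certainty_reflection :
  nested_atoms_certain -> certainty_reflection G p.
Proof.
move=> nested E q w _ qE; set A := m w.
apply/(prob_eq1P (pm w)) => x px; rewrite inE.
have xA : x \in A.
  by move: x px; apply/(prob_eq1P (pm w))/(cps_prob_supset p_cps (atomG w)).
have sxA := atom_sub G_inter G_cover xA.
have [->|neq] := eqVneq (m x) A; first by rewrite qE.
rewrite (cps_cond_eq p_cps _ (atomG w) (atomG x) sxA) ?qE //.
by apply: nested; rewrite properEneq neq sxA.
Qed.

End CertaintyReflection.

Theorem theorem5 (R : realFieldType) (Omega : finType)
  (G : {set {set Omega}}) (p : {set Omega} -> {ffun Omega -> R}) :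
  is_CPS G p -> one_closed G p -> union_closed G ->
  nonempty_inter_closed G -> covers G ->
  (certainty_reflection G p <->
   forall w' w : Omega, atom G w' \proper atom G w ->
     prob (p (atom G w)) (atom G w') = 1).
Proof.
move=> p_cps one_cl _ G_inter G_cover; split.
- exact: certainty_reflection_nested_atoms.
- exact: nested_atoms_certainty_reflection.
Qed.
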